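(* For every $\omega\in\mathbb C\setminus i\mathbb R$ and every $y\in\big((2\operatorname{Re}\omega)^{-1}\mathbb Z\big)\setminus\big(\omega^{-1}\mathbb Z\cup\bar\omega^{-1}\mathbb Z\big)$, $$\sum_{k\in\mathbb Z}\frac{|\omega|^2y^2-k^2}{|\omega|^4y^4-2\operatorname{Re}(\omega^2)k^2y^2+k^4}=0.$$ In particular, for every $n\in\mathbb Z\setminus\{0\}$, $$\sum_{k\in\mathbb Z}\frac{n^2-k^2}{n^4+n^2k^2+k^4}=0\qquad\text{and}\qquad\sum_{k\in\mathbb Z}\frac{n^2-2k^2}{n^4+4k^4}=0.$$ *)

From Stdlib Require Import Reals ZArith.
From Coquelicot Require Import Coquelicot.
Open Scope R_scope.

Definition zsum_is (f : Z -> R) (l : R) : Prop :=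
  exists a b : R,
    is_series (fun n : nat => f (Z.of_nat n)) a /\
    is_series (fun n : nat => f (- Z.of_nat (S n))%Z) b /\
    a + b = l.

Definition in_invZ (c z : C) : Prop :=
  exists m : Z, z = Cdiv (RtoC (IZR m)) c.

(* Write M = 2 y Re w (an integer m) and s = (y Im w)^2.  The denominator factors as
   ((k - M/2)^2 + s) ((k + M/2)^2 + s), and the summand is the difference G k - G (k + m)
   of the rational function G k = (1/2 - k/M) / ((k - M/2)^2 + s), which tends to 0 at
   both ends; so the two-sided sum telescopes to 0.  The two special series are the cases
   M = n with s = 3n^2/4 and s = n^2/4. *)

From Stdlib Require Import Reals ZArith Lra Lia Psatz.
From Coquelicot Require Import Coquelicot.
Open Scope R_scope.

Lemma zsum_ext (f g : Z -> R) (l : R) :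
  (forall k, f k = g k) -> zsum_is f l -> zsum_is g l.
Proof.
  intros E [a [b [Ha [Hb Hab]]]]. exists a, b. split; [|split]; [| |exact Hab].
  - exact (is_series_ext _ _ _ (fun n => E _) Ha).
  - exact (is_series_ext _ _ _ (fun n => E _) Hb).
Qed.

Lemma zsum_plus (f g : Z -> R) (l1 l2 : R) :
  zsum_is f l1 -> zsum_is g l2 -> zsum_is (fun k => f k + g k) (l1 + l2).
Proof.
  intros [a [b [Ha [Hb Hab]]]] [c [d [Hc [Hd Hcd]]]].
  exists (a + c), (b + d). split; [|split].
  - exact (is_series_plus _ _ _ _ Ha Hc).
  - exact (is_series_plus _ _ _ _ Hb Hd).
  - lra.
Qed.

Lemma zsum_opp (f : Z -> R) (l : R) : zsum_is f l -> zsum_is (fun k => - f k) (- l).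
Proof.
  intros [a [b [Ha [Hb Hab]]]]. exists (- a), (- b). split; [|split].
  - exact (is_series_opp _ _ Ha).
  - exact (is_series_opp _ _ Hb).
  - lra.
Qed.

Lemma zsum_scal (c : R) (f : Z -> R) (l : R) :
  zsum_is f l -> zsum_is (fun k => c * f k) (c * l).
Proof.
  intros [a [b [Ha [Hb Hab]]]]. exists (c * a), (c * b). split; [|split].
  - exact (is_series_scal _ _ _ Ha).
  - exact (is_series_scal _ _ _ Hb).
  - rewrite <- Hab. ring.
Qed.

Lemma is_series_telescope (a : nat -> R) (l : R) :
  is_lim_seq a l -> is_series (fun n => a n - a (S n)) (a O - l).
Proof.
  intro Hl.
  enough (H : is_lim_seq (sum_n (fun n => a n - a (S n))) (a O - l)) by exact H.
  apply (is_lim_seq_ext (fun n => a O - a (S n))).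
  - intro n. induction n as [|n IH].
    + now rewrite sum_O.
    + rewrite sum_Sn, <- IH. unfold plus; simpl. ring.
  - exact (is_lim_seq_minus' _ _ _ _ (is_lim_seq_const (a O))
             (proj1 (is_lim_seq_incr_1 a l) Hl)).
Qed.

Definition vanishes_at_infty (G : Z -> R) : Prop :=
  forall eps, 0 < eps -> exists M, forall k, M <= Rabs (IZR k) -> Rabs (G k) < eps.

Lemma vanishes_at_infty_shift (G : Z -> R) (z : Z) :
  vanishes_at_infty G -> vanishes_at_infty (fun k => G (k + z)%Z).
Proof.
  intros HG eps Heps. destruct (HG eps Heps) as [M HM].
  exists (M + Rabs (IZR z)). intros k Hk. apply HM.
  rewrite plus_IZR.
  pose proof (Rabs_triang_inv (IZR k) (- IZR z)) as Htri.
  rewrite Rabs_Ropp in Htri.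
  replace (IZR k - - IZR z) with (IZR k + IZR z) in Htri by ring. lra.
Qed.

Lemma vanishes_at_infty_reflect (G : Z -> R) :
  vanishes_at_infty G -> vanishes_at_infty (fun k => G (- k)%Z).
Proof.
  intros HG eps Heps. destruct (HG eps Heps) as [M HM].
  exists M. intros k Hk. apply HM. now rewrite opp_IZR, Rabs_Ropp.
Qed.

Lemma is_lim_seq_vanishes_at_infty (G : Z -> R) :
  vanishes_at_infty G -> is_lim_seq (fun n => G (Z.of_nat n)) 0.
Proof.
  intro HG. apply is_lim_seq_spec. intros [eps Heps]. simpl.
  destruct (HG eps Heps) as [M HM].
  destruct (archimed M) as [HupM _].
  exists (Z.to_nat (up M)). intros n Hn.
  rewrite Rminus_0_r. apply HM.
  rewrite <- INR_IZR_INZ, Rabs_pos_eq by apply pos_INR.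
  apply le_INR in Hn. rewrite INR_IZR_INZ in Hn.
  destruct (Z_lt_le_dec (up M) 0) as [Hneg|Hnneg].
  - pose proof (IZR_lt _ _ Hneg). pose proof (pos_INR n). lra.
  - rewrite Z2Nat.id in Hn by lia. lra.
Qed.

Lemma vanishes_at_infty_rational (al be c e : R) : 0 <= e ->
  vanishes_at_infty (fun k => (al * IZR k + be) / ((IZR k - c) ^ 2 + e)).
Proof.
  intros He eps Heps.
  set (C := Rabs al + Rabs be).
  assert (HC : 0 <= C) by (pose proof (Rabs_pos al); pose proof (Rabs_pos be); unfold C; lra).
  assert (HCe : 0 <= 4 * C / eps) by (apply Rdiv_le_0_compat; lra).
  exists (1 + 2 * Rabs c + 4 * C / eps). intros k Hk.
  set (K := IZR k) in *.
  pose proof (Rabs_pos c).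
  assert (Hdist : Rabs K / 2 <= Rabs (K - c)) by (pose proof (Rabs_triang_inv K c); lra).
  assert (Hden : Rabs K * Rabs K / 4 <= (K - c) ^ 2 + e).
  { rewrite <- (pow2_abs (K - c)). pose proof (Rabs_pos (K - c)). nra. }
  assert (Hnum : Rabs (al * K + be) <= C * Rabs K).
  { pose proof (Rabs_triang (al * K) be). rewrite Rabs_mult in *.
    pose proof (Rabs_pos al). pose proof (Rabs_pos be). unfold C. nra. }
  assert (Hlarge : 4 * C < eps * Rabs K).
  { replace (4 * C) with (eps * (4 * C / eps)) by (field; lra). nra. }
  assert (Hpos : 0 < (K - c) ^ 2 + e) by nra.
  rewrite Rabs_div, (Rabs_pos_eq ((K - c) ^ 2 + e)) by lra.
  apply Rlt_div_l; nra.
Qed.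

Lemma zsum_telescope1 (G : Z -> R) :
  vanishes_at_infty G -> zsum_is (fun k => G k - G (k + 1)%Z) 0.
Proof.
  intro HG. exists (G 0%Z - 0), (- (G 0%Z - 0)). split; [|split]; [| |ring].
  - apply (is_series_ext (fun n => G (Z.of_nat n) - G (Z.of_nat (S n)))).
    + intro n. now rewrite Nat2Z.inj_succ.
    + now apply is_series_telescope, is_lim_seq_vanishes_at_infty.
  - apply (is_series_ext (fun n => - (G (- Z.of_nat n)%Z - G (- Z.of_nat (S n))%Z))).
    + intro n. replace (- Z.of_nat (S n) + 1)%Z with (- Z.of_nat n)%Z by lia. lra.
    + exact (is_series_opp _ _ (is_series_telescope (fun n => G (- Z.of_nat n)%Z) 0
               (is_lim_seq_vanishes_at_infty _ (vanishes_at_infty_reflect G HG)))).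
Qed.

Lemma zsum_telescope_nat (p : nat) (G : Z -> R) :
  vanishes_at_infty G -> zsum_is (fun k => G k - G (k + Z.of_nat (S p))%Z) 0.
Proof.
  revert G. induction p as [|p IH]; intros G HG.
  - exact (zsum_telescope1 G HG).
  - rewrite <- (Rplus_0_r 0).
    apply (zsum_ext (fun k => (G k - G (k + 1)%Z)
                     + (G (k + 1)%Z - G (k + Z.of_nat (S p) + 1)%Z))).
    + intro k. replace (k + Z.of_nat (S p) + 1)%Z with (k + Z.of_nat (S (S p)))%Z by lia.
      ring.
    + apply zsum_plus; [exact (zsum_telescope1 G HG)|].
      exact (IH _ (vanishes_at_infty_shift G 1 HG)).
Qed.

Lemma zsum_telescope (m : Z) (G : Z -> R) :
  vanishes_at_infty G -> zsum_is (fun k => G k - G (k + m)%Z) 0.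
Proof.
  intro HG. destruct (Z.lt_trichotomy m 0) as [Hm|[->|Hm]].
  - rewrite <- Ropp_0.
    set (p := Z.to_nat (- m - 1)).
    apply (zsum_ext (fun k => - (G (k + m)%Z - G (k + Z.of_nat (S p) + m)%Z))).
    + intro k. replace (k + Z.of_nat (S p) + m)%Z with k by lia. ring.
    + exact (zsum_opp _ _ (zsum_telescope_nat p _ (vanishes_at_infty_shift G m HG))).
  - rewrite <- (Rmult_0_l 0).
    apply (zsum_ext (fun k => 0 * (G k - G (k + 1)%Z))).
    + intro k. rewrite Z.add_0_r. ring.
    + exact (zsum_scal 0 _ _ (zsum_telescope1 G HG)).
  - replace m with (Z.of_nat (S (Z.to_nat (m - 1)))) by lia.
    exact (zsum_telescope_nat _ G HG).
Qed.

Lemma zsum_product_quadratics (m : Z) (s : R) :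
  m <> 0%Z -> 0 <= s ->
  (forall k : Z, (IZR k - IZR m / 2) ^ 2 + s <> 0) ->
  zsum_is
    (fun k => (IZR m ^ 2 / 4 + s - IZR k ^ 2) /
              (((IZR k - IZR m / 2) ^ 2 + s) * ((IZR k + IZR m / 2) ^ 2 + s)))
    0.
Proof.
  intros Hm Hs Hnz.
  assert (HM : IZR m <> 0) by now apply not_0_IZR.
  set (G := fun k : Z => (- / IZR m * IZR k + 1 / 2) / ((IZR k - IZR m / 2) ^ 2 + s)).
  apply (zsum_ext (fun k => G k - G (k + m)%Z));
    [|exact (zsum_telescope m G (vanishes_at_infty_rational _ _ _ _ Hs))].
  intro k. unfold G. rewrite plus_IZR.
  assert (Hnz' : (IZR k + IZR m / 2) ^ 2 + s <> 0).
  { replace (IZR k + IZR m / 2) with (- (IZR (- k) - IZR m / 2)) by (rewrite opp_IZR; ring).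
    rewrite <- Rsqr_pow2, <- Rsqr_neg, Rsqr_pow2. apply Hnz. }
  pose proof (Hnz k).
  replace (IZR k + IZR m - IZR m / 2) with (IZR k + IZR m / 2) by field.
  field; repeat split; [intro E; apply Hnz' | intro E; apply H | exact HM]; nra.
Qed.

Lemma in_invZ_0 (w : C) : in_invZ w (RtoC 0).
Proof. exists 0%Z. unfold Cdiv, Cmult, RtoC. simpl. f_equal; ring. Qed.

Lemma in_invZ_real (u y : R) (k : Z) :
  u <> 0 -> y * u = IZR k -> in_invZ (u, 0) (RtoC y).
Proof.
  intros Hu Hk. exists k. rewrite <- Hk. unfold Cdiv, Cmult, Cinv, RtoC. simpl.
  f_equal; field; auto.
Qed.

Lemma Cmod_sqr (u v : R) : Cmod (u, v) ^ 2 = u ^ 2 + v ^ 2.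
Proof. unfold Cmod. rewrite pow2_sqrt; simpl; nra. Qed.

Lemma zsum_general :
  forall (w : C) (y : R),
    Re w <> 0 ->
    in_invZ (RtoC (2 * Re w)) (RtoC y) ->
    ~ in_invZ w (RtoC y) ->
    zsum_is
      (fun k : Z =>
         ((Cmod w) ^ 2 * y ^ 2 - (IZR k) ^ 2) /
         ((Cmod w) ^ 4 * y ^ 4 - 2 * Re (Cmult w w) * (IZR k) ^ 2 * y ^ 2
          + (IZR k) ^ 4))
      0.
Proof.
  intros [u v] y Hu [m Hm] Hw. simpl in Hu.
  apply (f_equal fst) in Hm. simpl in Hm.
  assert (Hy : y = IZR m / (2 * u)) by (rewrite Hm; field; lra).
  assert (Hy0 : y <> 0) by (intros ->; exact (Hw (in_invZ_0 _))).
  assert (Hm0 : m <> 0%Z) by (intros ->; apply Hy0; rewrite Hy; field; lra).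
  assert (Hpoles : forall k : Z, (IZR k - IZR m / 2) ^ 2 + (v * y) ^ 2 <> 0).
  { intros k E.
    pose proof (pow2_ge_0 (IZR k - IZR m / 2)).
    destruct (Req_dec v 0) as [->|Hv].
    - assert (Hk : IZR k = IZR m / 2).
      { apply Rminus_diag_uniq, Rsqr_0_uniq. rewrite Rsqr_pow2. nra. }
      apply Hw, (in_invZ_real u y k); [lra|]. rewrite Hk, Hy. field. lra.
    - assert (0 < (v * y) ^ 2)
        by (apply pow2_gt_0, Rmult_integral_contrapositive_currified; assumption).
      lra. }
  assert (HM : IZR m = 2 * u * y) by (rewrite Hy; field; lra).
  eapply zsum_ext;
    [|exact (zsum_product_quadratics m ((v * y) ^ 2) Hm0 (pow2_ge_0 _) Hpoles)].
  intro k. rewrite HM. replace (Cmod (u, v) ^ 4) with ((Cmod (u, v) ^ 2) ^ 2) by ring.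
  rewrite Cmod_sqr. simpl Re. apply (f_equal2 Rdiv); field.
Qed.

Lemma zsum_integer_cases :
  forall n : Z, n <> 0%Z ->
    zsum_is
      (fun k : Z =>
         ((IZR n) ^ 2 - (IZR k) ^ 2) /
         ((IZR n) ^ 4 + (IZR n) ^ 2 * (IZR k) ^ 2 + (IZR k) ^ 4))
      0
    /\
    zsum_is
      (fun k : Z =>
         ((IZR n) ^ 2 - 2 * (IZR k) ^ 2) / ((IZR n) ^ 4 + 4 * (IZR k) ^ 4))
      0.
Proof.
  intros n Hn. assert (HN : 0 < IZR n ^ 2) by (apply pow2_gt_0, not_0_IZR; exact Hn).
  assert (Hsum : forall c, 0 < c -> zsum_is (fun k =>
            (IZR n ^ 2 / 4 + c * IZR n ^ 2 - IZR k ^ 2) /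
            (((IZR k - IZR n / 2) ^ 2 + c * IZR n ^ 2) *
             ((IZR k + IZR n / 2) ^ 2 + c * IZR n ^ 2))) 0).
  { intros c Hc. apply zsum_product_quadratics; [exact Hn|nra|].
    intros k E. pose proof (pow2_ge_0 (IZR k - IZR n / 2)). nra. }
  split.
  - eapply zsum_ext; [|exact (Hsum (3 / 4) ltac:(lra))].
    intro k. apply (f_equal2 Rdiv); field.
  - rewrite <- (Rmult_0_r (1 / 2)).
    eapply zsum_ext; [|exact (zsum_scal (1 / 2) _ _ (Hsum (1 / 4) ltac:(lra)))].
    intro k. cbv beta.
    replace (((IZR k - IZR n / 2) ^ 2 + 1 / 4 * IZR n ^ 2) *
             ((IZR k + IZR n / 2) ^ 2 + 1 / 4 * IZR n ^ 2))
      with ((IZR n ^ 4 + 4 * IZR k ^ 4) / 4) by field.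
    assert (0 < IZR n ^ 4 + 4 * IZR k ^ 4) by (pose proof (pow2_ge_0 (IZR k ^ 2)); nra).
    field. lra.
Qed.

Theorem mainTheorem5 :
  (forall (w : C) (y : R),
      Re w <> 0 ->
      in_invZ (RtoC (2 * Re w)) (RtoC y) ->
      ~ in_invZ w (RtoC y) ->
      ~ in_invZ (Cconj w) (RtoC y) ->
      zsum_is
        (fun k : Z =>
           ((Cmod w) ^ 2 * y ^ 2 - (IZR k) ^ 2) /
           ((Cmod w) ^ 4 * y ^ 4 - 2 * Re (Cmult w w) * (IZR k) ^ 2 * y ^ 2
            + (IZR k) ^ 4))
        0)
  /\
  (forall n : Z, n <> 0%Z ->
      zsum_is
        (fun k : Z =>
           ((IZR n) ^ 2 - (IZR k) ^ 2) /
           ((IZR n) ^ 4 + (IZR n) ^ 2 * (IZR k) ^ 2 + (IZR k) ^ 4))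
        0
      /\
      zsum_is
        (fun k : Z =>
           ((IZR n) ^ 2 - 2 * (IZR k) ^ 2) / ((IZR n) ^ 4 + 4 * (IZR k) ^ 4))
        0).
Proof.
  split.
  - intros w y Hw Hy Hny _. exact (zsum_general w y Hw Hy Hny).
  - exact zsum_integer_cases.
Qed.
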